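(* Let $m\ge 2$ be an integer and $a>0$. Let $\mathcal{H}_\infty$ be the $m$-order infinite dimensional generalized Hilbert tensor with entries $\mathcal{H}_{i_1\cdots i_m}=\frac{1}{i_1+\cdots+i_m-m+a}$, $i_1,\dots,i_m\in\{1,2,\dots\}$, and for $x\in l^1$ let $\mathcal{H}_\infty x^{m-1}$ be the infinite vector with components $$(\mathcal{H}_\infty x^{m-1})_i=\sum_{i_2,\dots,i_m=1}^\infty\frac{x_{i_2}\cdots x_{i_m}}{i+i_2+\cdots+i_m-m+a},\quad i=1,2,\dots.$$ Define $$T_\infty x=\begin{cases}\|x\|_{l^1}^{2-m}\,\mathcal{H}_\infty x^{m-1}, & x\neq\theta,\\ \theta, & x=\theta,\end{cases}$$ and, when $m$ is even, $F_\infty x=(\mathcal{H}_\infty x^{m-1})^{[\frac{1}{m-1}]}$, where $y^{[\frac1{m-1}]}=(y_1^{\frac1{m-1}},y_2^{\frac1{m-1}},\dots)$ (real $(m-1)$-th roots, $m-1$ odd) and $\theta=(0,0,\dots)$. (i) Suppose $m$ is even. If $x\in l^1$, then $F_\infty x\in l^p$ for every $m-1<p<\infty$. Moreover, $F_\infty$ is a bounded, continuous and positively homogeneous operator from $l^1$ into $l^p$ ($m-1<p<\infty$). In particular, $$\|F_\infty\|=\sup_{\|x\|_{l^1}=1}\|F_\infty x\|_{l^{2(m-1)}}\le K(a),\qquad K(a)=\begin{cases}\left(\frac{1}{a^2}+\frac{\pi^2}{6}\right)^{\frac{1}{2(m-1)}}, & 0<a<1,\\ \left(\frac{\pi^2}{6}\right)^{\frac{1}{2(m-1)}},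 & a\ge 1.\end{cases}$$ (ii) If $x\in l^1$, then $T_\infty x\in l^p$ for every $1<p<\infty$. Moreover, $T_\infty$ is a bounded, continuous and positively homogeneous operator from $l^1$ into $l^p$ ($1<p<\infty$). In particular, $$\|T_\infty\|=\sup_{\|x\|_{l^1}=1}\|T_\infty x\|_{l^2}\le C(a),\qquad C(a)=\begin{cases}\sqrt{\frac{1}{a^2}+\frac{\pi^2}{6}}, & 0<a<1,\\ \frac{\pi}{\sqrt6}, & a\ge1.\end{cases}$$
   Context: For $p\ge1$, $l^p$ is the space of real sequences $x=(x_i)_{i=1}^\infty$ with $\|x\|_{l^p}=(\sum_{i=1}^\infty|x_i|^p)^{1/p}<\infty$. For real Banach spaces $X,Y$, an operator $T:X\to Y$ is positively homogeneous if $T(tx)=tT(x)$ for all $t>0$, $x\in X$; it is bounded if there is $M>0$ with $\|Tx\|_Y\le M\|x\|_X$ for all $x\in X$. For a bounded, continuous, positively homogeneous $T$, its norm is $\|T\|=\sup\{\|Tx\|_Y:\|x\|_X=1\}$. *)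

From Stdlib Require Import Reals Lra ClassicalEpsilon.
From Coquelicot Require Import Coquelicot.
Open Scope R_scope.

(* Sequences are indexed from 0: x i (i : nat) is the paper's x_{i+1}. *)

Definition rpow (y p : R) : R := if Rlt_dec 0 y then Rpower y p else 0.

Definition lp_mem (p : R) (x : nat -> R) : Prop :=
  ex_series (fun i => rpow (Rabs (x i)) p).
Definition lp_norm (p : R) (x : nat -> R) : R :=
  rpow (Series (fun i => rpow (Rabs (x i)) p)) (1 / p).

Definition theta : nat -> R := fun _ => 0.
Definition sscale (t : R) (x : nat -> R) : nat -> R := fun i => t * x i.
Definition ssub (x y : nat -> R) : nat -> R := fun i => x i - y i.

(* Iterated series: Hgen a x 0 s = 1/(s+a),
   Hgen a x (n+1) s = sum_j x_j * Hgen a x n (s + j).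
   With 0-based indices, entry 1/(i1+...+im-m+a) becomes 1/(j1+...+jm+a). *)
Fixpoint Hgen (a : R) (x : nat -> R) (n : nat) (s : R) : R :=
  match n with
  | O => / (s + a)
  | S n' => Series (fun j => x j * Hgen a x n' (s + INR j))
  end.

Definition Hx (m : nat) (a : R) (x : nat -> R) : nat -> R :=
  fun i => Hgen a x (m - 1) (INR i).

Definition oddroot (n : nat) (y : R) : R :=
  if Rlt_dec y 0 then - rpow (- y) (1 / INR n) else rpow y (1 / INR n).

Definition F_inf (m : nat) (a : R) (x : nat -> R) : nat -> R :=
  fun i => oddroot (m - 1) (Hx m a x i).

Definition T_inf (m : nat) (a : R) (x : nat -> R) : nat -> R :=
  if excluded_middle_informative (x = theta) then theta
  else fun i => Rpower (lp_norm 1 x) (2 - INR m) * Hx m a x i.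

Definition bounded_op (p : R) (T : (nat -> R) -> (nat -> R)) : Prop :=
  exists M, 0 < M /\ forall x, lp_mem 1 x -> lp_norm p (T x) <= M * lp_norm 1 x.

Definition continuous_op (p : R) (T : (nat -> R) -> (nat -> R)) : Prop :=
  forall x, lp_mem 1 x -> forall eps, 0 < eps -> exists delta, 0 < delta /\
    forall y, lp_mem 1 y -> lp_norm 1 (ssub y x) < delta ->
      lp_norm p (ssub (T y) (T x)) < eps.

Definition pos_homog (T : (nat -> R) -> (nat -> R)) : Prop :=
  forall x t, lp_mem 1 x -> 0 < t -> T (sscale t x) = sscale t (T x).

Definition K_const (m : nat) (a : R) : R :=
  if Rlt_dec a 1 then Rpower (1 / a ^ 2 + PI ^ 2 / 6) (1 / (2 * (INR m - 1)))
  else Rpower (PI ^ 2 / 6) (1 / (2 * (INR m - 1))).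

Definition C_const (a : R) : R :=
  if Rlt_dec a 1 then sqrt (1 / a ^ 2 + PI ^ 2 / 6) else PI / sqrt 6.

(* The iterated series satisfy |(H x^(m-1))_i| <= ||x||_1^(m-1) / (i + a), and H is
   locally Lipschitz from l^1 into sequences weighted by 1 / (i + a).  Hence T x and F x
   are dominated coordinatewise by ||x||_1 (i + a)^(-q), with q = 1 for T and
   q = 1/(m-1) for F (the (m-1)-th root being 1/(m-1)-Hoelder), and T y - T x, F y - F x
   are dominated by eps (i + a)^(-q) for y close to x in l^1.  As sum_i (i + a)^(-r)
   converges for r = q p > 1, this gives membership in l^p, boundedness and continuity;
   for the norm bounds r = 2, and sum_i (i + a)^(-2) <= [a < 1] a^(-2) + PI^2/6 by
   Basel's bound. *)

From Stdlib Require Import Reals Lra Lia FunctionalExtensionality ClassicalEpsilon.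
From Coquelicot Require Import Coquelicot.
Open Scope R_scope.

(** * Real powers *)

Lemma Rpower_gt0 x y : 0 < Rpower x y.
Proof. apply exp_pos. Qed.

Lemma rpow_ge0 y p : 0 <= rpow y p.
Proof. unfold rpow; destruct (Rlt_dec 0 y); [left; apply Rpower_gt0 | lra]. Qed.

Lemma rpowE y p : 0 < y -> rpow y p = Rpower y p.
Proof. intro Hy; unfold rpow; destruct (Rlt_dec 0 y); [reflexivity | lra]. Qed.

Lemma rpow0 p : rpow 0 p = 0.
Proof. unfold rpow; destruct (Rlt_dec 0 0); [lra | reflexivity]. Qed.

Lemma rpow1 u : 0 <= u -> rpow u 1 = u.
Proof.
  intros [Hu | <-]; [rewrite rpowE by lra; apply Rpower_1; lra | apply rpow0].
Qed.

Lemma rpow_le u v p : 0 <= u <= v -> 0 < p -> rpow u p <= rpow v p.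
Proof.
  intros [[Hu | <-] Huv] Hp.
  - rewrite !rpowE by lra. apply Rle_Rpower_l; lra.
  - rewrite rpow0. apply rpow_ge0.
Qed.

Lemma rpowM u v p : 0 <= u -> 0 <= v -> rpow (u * v) p = rpow u p * rpow v p.
Proof.
  intros [Hu | <-] [Hv | <-]; try (rewrite ?Rmult_0_l, ?Rmult_0_r, !rpow0; ring).
  rewrite !rpowE by nra. symmetry; apply Rpower_mult_distr; lra.
Qed.

Lemma rpowK c p : 0 <= c -> 0 < p -> rpow (rpow c p) (1 / p) = c.
Proof.
  intros [Hc | <-] Hp; [| rewrite !rpow0; reflexivity].
  rewrite (rpowE c), rpowE by (auto; apply Rpower_gt0).
  rewrite Rpower_mult. replace (p * (1 / p)) with 1 by (field; lra). apply Rpower_1; lra.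
Qed.

Lemma rpow_pow_inv c n : 0 <= c -> (1 <= n)%nat -> rpow (c ^ n) (1 / INR n) = c.
Proof.
  intros [Hc | <-] Hn; [| rewrite pow_i by lia; apply rpow0].
  rewrite rpowE by (apply pow_lt; lra). rewrite <- Rpower_pow, Rpower_mult by lra.
  replace (INR n * (1 / INR n)) with 1 by (field; apply not_0_INR; lia).
  apply Rpower_1; lra.
Qed.

Lemma inv_INR_bounds n : (1 <= n)%nat -> 0 < 1 / INR n <= 1.
Proof.
  intro Hn. assert (1 <= INR n) by (apply (le_INR 1); auto).
  split; [apply Rdiv_lt_0_compat; lra |].
  unfold Rdiv; rewrite Rmult_1_l, <- Rinv_1. apply Rinv_le_contravar; lra.
Qed.

Lemma Rpower_ge_self l al : 0 < l <= 1 -> 0 < al <= 1 -> l <= Rpower l al.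
Proof.
  intros Hl Hal. assert (ln l <= 0) by (rewrite <- ln_1; apply ln_le; lra).
  unfold Rpower. rewrite <- (exp_ln l) at 1 by lra. 
  assert (Hle : ln l <= al * ln l) by nra.
  destruct Hle as [Hlt | Heq]; [left; apply exp_increasing, Hlt | rewrite <- Heq; lra].
Qed.

Lemma rpow_subadd s t al : 0 <= s -> 0 <= t -> 0 < al <= 1 ->
  rpow (s + t) al <= rpow s al + rpow t al.
Proof.
  intros [Hs | <-]; [| rewrite Rplus_0_l, rpow0; lra].
  intros [Ht | <-]; [| rewrite Rplus_0_r, rpow0; lra].
  intro Hal. set (w := s + t). assert (Hw : 0 < w) by (unfold w; lra).
  rewrite !rpowE by lra.
  assert (Hsplit : forall u, 0 < u <= w -> Rpower u al = Rpower w al * Rpower (u / w) al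
                                          /\ u / w <= Rpower (u / w) al).
  { intros u Hu. assert (Huw : 0 < u / w <= 1).
    { split; [apply Rdiv_lt_0_compat; lra |].
      apply (Rmult_le_reg_r w); [lra |]. unfold Rdiv; rewrite Rmult_assoc, Rinv_l; lra. }
    split; [| apply Rpower_ge_self; auto].
    rewrite Rpower_mult_distr by lra. f_equal. field. lra. }
  destruct (Hsplit s) as [-> Hs']; [unfold w; lra |].
  destruct (Hsplit t) as [-> Ht']; [unfold w; lra |].
  assert (Hsum : s / w + t / w = 1) by (unfold w; field; lra).
  pose proof (Rpower_gt0 w al). nra.
Qed.

Lemma rpow_holder s t al : 0 <= s -> 0 <= t -> 0 < al <= 1 ->
  Rabs (rpow s al - rpow t al) <= rpow (Rabs (s - t)) al.
Proof.
  intros Hs Ht Hal.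
  assert (Hwlog : forall u v, 0 <= u <= v ->
            Rabs (rpow v al - rpow u al) <= rpow (Rabs (v - u)) al).
  { intros u v Huv. rewrite (Rabs_right (v - u)) by lra.
    pose proof (rpow_subadd u (v - u) al ltac:(lra) ltac:(lra) Hal).
    pose proof (rpow_le u v al Huv ltac:(lra)).
    replace (u + (v - u)) with v in * by ring.
    rewrite Rabs_right; lra. }
  destruct (Rle_dec t s).
  - apply Hwlog; lra.
  - rewrite Rabs_minus_sym, (Rabs_minus_sym s). apply Hwlog; lra.
Qed.

Lemma oddroot_abs n y : Rabs (oddroot n y) = rpow (Rabs y) (1 / INR n).
Proof.
  unfold oddroot. destruct (Rlt_dec y 0).
  - rewrite Rabs_Ropp, (Rabs_left y) by lra. apply Rabs_right, Rle_ge, rpow_ge0.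
  - rewrite (Rabs_right y) by lra. apply Rabs_right, Rle_ge, rpow_ge0.
Qed.

Lemma oddroot_holder n u v : (1 <= n)%nat ->
  Rabs (oddroot n u - oddroot n v) <= 2 * rpow (Rabs (u - v)) (1 / INR n).
Proof.
  intro Hn. pose proof (inv_INR_bounds n Hn) as Hal. set (al := 1 / INR n) in *.
  pose proof (rpow_ge0 (Rabs (u - v)) al).
  unfold oddroot; fold al.
  destruct (Rlt_dec u 0) as [Hu | Hu]; destruct (Rlt_dec v 0) as [Hv | Hv].
  - replace (- rpow (- u) al - - rpow (- v) al) with (- (rpow (- u) al - rpow (- v) al)) by ring.
    replace (u - v) with (- (- u - - v)) by ring. rewrite !Rabs_Ropp.
    pose proof (rpow_holder (- u) (- v) al ltac:(lra) ltac:(lra) Hal).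
    pose proof (rpow_ge0 (Rabs (- u - - v)) al). lra.
  - (* opposite signs: each root is at most |u - v|^al *)
    pose proof (rpow_le (- u) (Rabs (u - v)) al ltac:(split_Rabs; lra) ltac:(lra)).
    pose proof (rpow_le v (Rabs (u - v)) al ltac:(split_Rabs; lra) ltac:(lra)).
    pose proof (rpow_ge0 (- u) al). pose proof (rpow_ge0 v al).
    rewrite Rabs_left1 by lra. lra.
  - pose proof (rpow_le u (Rabs (u - v)) al ltac:(split_Rabs; lra) ltac:(lra)).
    pose proof (rpow_le (- v) (Rabs (u - v)) al ltac:(split_Rabs; lra) ltac:(lra)).
    pose proof (rpow_ge0 u al). pose proof (rpow_ge0 (- v) al).
    rewrite Rabs_right by lra. lra.
  - pose proof (rpow_holder u v al ltac:(lra) ltac:(lra) Hal). lra.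
Qed.

Lemma oddroot_scale n t y : (1 <= n)%nat -> 0 < t -> oddroot n (t ^ n * y) = t * oddroot n y.
Proof.
  intros Hn Ht. assert (Htn : 0 < t ^ n) by (apply pow_lt; auto).
  assert (E : rpow (t ^ n) (1 / INR n) = t) by (apply rpow_pow_inv; [lra | exact Hn]).
  unfold oddroot.
  destruct (Rlt_dec y 0) as [Hy | Hy]; destruct (Rlt_dec (t ^ n * y) 0) as [Hty | Hty]; try nra.
  - replace (- (t ^ n * y)) with (t ^ n * - y) by ring. rewrite rpowM, E by lra. ring.
  - rewrite rpowM, E by lra. reflexivity.
Qed.

Lemma Rpower_base_continuous r c e : 0 < c -> 0 < e ->
  exists d, 0 < d /\ forall t, Rabs (t - c) < d -> Rabs (Rpower t r - Rpower c r) < e.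
Proof.
  intros Hc He.
  assert (Hcont : continuity_pt (fun t => Rpower t r) c).
  { apply continuity_pt_filterlim.
    apply (@ex_derive_continuous R_AbsRing R_NormedModule (fun t => exp (r * ln t)) c).
    auto_derive. exact Hc. }
  destruct (Hcont e He) as [d [Hd H]]. exists d; split; auto.
  intros t Ht. destruct (Req_dec t c) as [-> | Htc].
  - rewrite Rminus_eq_0, Rabs_R0; exact He.
  - apply (H t). repeat split; auto.
Qed.

(** * Series of nonnegative terms and the l^1 norm *)

Lemma ex_series_Rmult_l c (g : nat -> R) : ex_series g -> ex_series (fun i => c * g i).
Proof. apply (ex_series_scal_l (K := R_AbsRing) (V := R_NormedModule)). Qed.

Lemma Series_ge0 (a : nat -> R) : (forall n, 0 <= a n) -> ex_series a -> 0 <= Series a.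
Proof.
  intros Ha Hex. rewrite <- (Rmult_0_l (Series a)), <- Series_scal_l.
  apply Series_le; auto. intro n; split; [lra | rewrite Rmult_0_l; auto].
Qed.

Lemma sum_n_le_Series (a : nat -> R) n : (forall k, 0 <= a k) -> ex_series a ->
  sum_n a n <= Series a.
Proof.
  intros Ha Hex. rewrite (Series_incr_n a (S n)), sum_n_Reals by (auto; lia).
  assert (0 <= Series (fun k => a (S n + k)%nat)); [| change (Nat.pred (S n)) with n; lra].
  apply Series_ge0; auto. apply (ex_series_incr_n a (S n)); auto.
Qed.

Lemma term_le_Series (a : nat -> R) n : (forall k, 0 <= a k) -> ex_series a -> a n <= Series a.
Proof.
  intros Ha Hex. eapply Rle_trans; [| apply (sum_n_le_Series a n); auto].
  rewrite sum_n_Reals. destruct n as [| n]; simpl; [lra |].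
  pose proof (cond_pos_sum a n Ha). lra.
Qed.

Lemma ex_series_bounded (a : nat -> R) B : (forall n, 0 <= a n) -> (forall n, sum_n a n <= B) ->
  ex_series a /\ Series a <= B.
Proof.
  intros Ha HB.
  destruct (growing_cv (sum_n a)) as [l Hl].
  - intro n. rewrite sum_Sn. pose proof (Ha (S n)). simpl; unfold plus; simpl; lra.
  - exists B. intros y [n ->]. auto.
  - apply is_lim_seq_Reals in Hl.
    assert (Hs : is_series a l) by exact Hl.
    rewrite (is_series_unique _ _ Hs). split; [exists l; auto |].
    exact (is_lim_seq_le (sum_n a) (fun _ => B) l B HB Hl (is_lim_seq_const B)).
Qed.

Lemma ex_series_Rabs_le (f g : nat -> R) : (forall j, Rabs (f j) <= g j) -> ex_series g ->
  ex_series (fun j => Rabs (f j)).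
Proof.
  intros Hfg Hg. apply (@ex_series_le R_AbsRing R_CompleteNormedModule _ g); auto.
  intro n. change (Rabs (Rabs (f n)) <= g n). rewrite Rabs_Rabsolu; auto.
Qed.

Lemma Series_Rabs_le (f g : nat -> R) : (forall j, Rabs (f j) <= g j) -> ex_series g ->
  Rabs (Series f) <= Series g.
Proof.
  intros Hfg Hg. pose proof (ex_series_Rabs_le f g Hfg Hg).
  eapply Rle_trans; [apply Series_Rabs; auto |].
  apply Series_le; auto. intro n; split; [apply Rabs_pos | auto].
Qed.

Definition abs_summable (x : nat -> R) : Prop := ex_series (fun i => Rabs (x i)).
Definition norm1 (x : nat -> R) : R := Series (fun i => Rabs (x i)).

Lemma lp_mem1 x : lp_mem 1 x <-> abs_summable x.
Proof.
  unfold lp_mem, abs_summable; split; apply ex_series_ext; intro n;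
    rewrite rpow1; auto; apply Rabs_pos.
Qed.

Lemma norm1_ge0 x : abs_summable x -> 0 <= norm1 x.
Proof. intro H; apply Series_ge0; auto; intro; apply Rabs_pos. Qed.

Lemma lp_norm1 x : abs_summable x -> lp_norm 1 x = norm1 x.
Proof.
  intro H. unfold lp_norm. replace (1 / 1) with 1 by field.
  rewrite (Series_ext _ (fun i => Rabs (x i))) by (intro; apply rpow1, Rabs_pos).
  apply rpow1, norm1_ge0; auto.
Qed.

Lemma norm1_gt0 x : abs_summable x -> x <> theta -> 0 < norm1 x.
Proof.
  intros Hx Hne. destruct (norm1_ge0 x Hx) as [| H0]; auto.
  exfalso; apply Hne, functional_extensionality; intro i; unfold theta.
  pose proof (term_le_Series (fun i => Rabs (x i)) i ltac:(intro; apply Rabs_pos) Hx).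
  fold (norm1 x) in H. rewrite <- H0 in H. pose proof (Rabs_pos (x i)).
  apply Rabs_eq_0. lra.
Qed.

Lemma Series_Rabs_mult_r x K : Series (fun j => Rabs (x j) * K) = norm1 x * K.
Proof.
  rewrite (Series_ext _ (fun j => K * Rabs (x j))) by (intro; ring).
  rewrite Series_scal_l. unfold norm1; ring.
Qed.

Lemma ex_series_Rabs_mult_r x K : abs_summable x -> ex_series (fun j => Rabs (x j) * K).
Proof.
  intro H. apply (ex_series_ext (K := R_AbsRing) (V := R_NormedModule) (fun j => K * Rabs (x j)));
    [intro; apply Rmult_comm |].
  apply ex_series_Rmult_l, H.
Qed.

Lemma abs_summable_sub x y : abs_summable x -> abs_summable y -> abs_summable (ssub y x).
Proof.
  intros Hx Hy. apply (ex_series_Rabs_le _ (fun i => Rabs (y i) + Rabs (x i))).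
  - intro n. unfold ssub. rewrite <- (Rabs_Ropp (x n)). apply Rabs_triang.
  - apply (ex_series_plus (K := R_AbsRing) (V := R_NormedModule)); auto.
Qed.

Lemma abs_summable_scale t x : abs_summable x -> abs_summable (sscale t x).
Proof.
  intro H. unfold abs_summable, sscale.
  apply (ex_series_ext (K := R_AbsRing) (V := R_NormedModule) (fun i => Rabs t * Rabs (x i)));
    [intro; symmetry; apply Rabs_mult |].
  apply ex_series_Rmult_l, H.
Qed.

Lemma norm1_triangle x y : abs_summable x -> abs_summable y ->
  norm1 y <= norm1 x + norm1 (ssub y x).
Proof.
  intros Hx Hy. pose proof (abs_summable_sub x y Hx Hy). unfold norm1.
  rewrite <- Series_plus by auto.
  apply Series_le; [| apply (ex_series_plus (K := R_AbsRing) (V := R_NormedModule)); auto].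
  intro n; split; [apply Rabs_pos |]. unfold ssub.
  replace (y n) with (x n + (y n - x n)) at 1 by ring. apply Rabs_triang.
Qed.

Lemma norm1_dist x y : abs_summable x -> abs_summable y ->
  Rabs (norm1 y - norm1 x) <= norm1 (ssub y x).
Proof.
  intros Hx Hy. pose proof (norm1_triangle x y Hx Hy). pose proof (norm1_triangle y x Hy Hx).
  replace (norm1 (ssub x y)) with (norm1 (ssub y x)) in *
    by (unfold norm1, ssub; apply Series_ext; intro; apply Rabs_minus_sym).
  apply Rabs_le; lra.
Qed.

(** * The Hurwitz series [sum_i (i + a)^(-r)] *)

Definition hurwitz_term (a r : R) (i : nat) : R := Rpower (INR i + a) (- r).
Definition hurwitz_zeta (a r : R) : R := Series (hurwitz_term a r).

Lemma hurwitz_term_gt0 a r i : 0 < hurwitz_term a r i.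
Proof. apply Rpower_gt0. Qed.

Lemma rpow_hurwitz_term a r p i : rpow (hurwitz_term a r i) p = hurwitz_term a (r * p) i.
Proof.
  rewrite rpowE by apply hurwitz_term_gt0. unfold hurwitz_term.
  rewrite Rpower_mult. f_equal; ring.
Qed.

Lemma hurwitz_term1 a i : 0 < a -> hurwitz_term a 1 i = / (INR i + a).
Proof.
  intro Ha. unfold hurwitz_term. rewrite Rpower_Ropp, Rpower_1; auto.
  pose proof (pos_INR i); lra.
Qed.

Lemma hurwitz_term2 a i : 0 < a -> hurwitz_term a 2 i = / (INR i + a) ^ 2.
Proof.
  intro Ha. unfold hurwitz_term. rewrite Rpower_Ropp. f_equal.
  apply (Rpower_pow 2). pose proof (pos_INR i); lra.
Qed.

Lemma ln_ge_1_sub_inv y : 0 < y -> 1 - / y <= ln y.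
Proof.
  intro Hy. pose proof (exp_ineq1_le (ln (/ y))).
  rewrite exp_ln, ln_Rinv in H by (try apply Rinv_0_lt_compat; lra). lra.
Qed.

(* The integral test for t^(-r) on [u, u + 1], from exp x >= 1 + x. *)
Lemma Rpower_sub_succ_ge u r : 0 < u -> 1 < r ->
  (r - 1) * Rpower (u + 1) (- r) <= Rpower u (1 - r) - Rpower (u + 1) (1 - r).
Proof.
  intros Hu Hr.
  set (w := Rpower (u + 1) (1 - r)). assert (Hw : 0 < w) by apply Rpower_gt0.
  assert (Hq : 0 < (u + 1) / u) by (apply Rdiv_lt_0_compat; lra).
  assert (Einv : u / (u + 1) = / ((u + 1) / u)) by (field; lra).
  assert (E1 : Rpower u (1 - r) = Rpower (u / (u + 1)) (1 - r) * w).
  { unfold w. rewrite Rpower_mult_distr by (try apply Rdiv_lt_0_compat; lra). f_equal; field; lra. }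
  assert (E2 : Rpower (u + 1) (- r) = w * / (u + 1)).
  { unfold w. replace (- r) with ((1 - r) + - (1)) by ring.
    rewrite Rpower_plus, Rpower_Ropp, Rpower_1 by lra. reflexivity. }
  assert (Hln : / (u + 1) <= ln ((u + 1) / u)).
  { replace (/ (u + 1)) with (1 - / ((u + 1) / u)) by (field; lra). apply ln_ge_1_sub_inv, Hq. }
  assert (Hexp : 1 + (r - 1) * ln ((u + 1) / u) <= Rpower (u / (u + 1)) (1 - r)).
  { unfold Rpower. rewrite Einv, ln_Rinv by exact Hq.
    replace ((1 - r) * - ln ((u + 1) / u)) with ((r - 1) * ln ((u + 1) / u)) by ring.
    apply exp_ineq1_le. }
  assert (H : (r - 1) * / (u + 1) <= Rpower (u / (u + 1)) (1 - r) - 1) by nra.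
  rewrite E1, E2. nra.
Qed.

Lemma ex_series_hurwitz a r : 0 < a -> 1 < r -> ex_series (hurwitz_term a r).
Proof.
  intros Ha Hr.
  assert (Hsum : forall n, sum_n (hurwitz_term a r) n
            <= Rpower a (- r) + (Rpower a (1 - r) - Rpower (INR n + a) (1 - r)) / (r - 1)).
  { induction n as [| n IH].
    - rewrite sum_O. unfold hurwitz_term; simpl. rewrite Rplus_0_l, Rminus_eq_0. lra.
    - rewrite sum_Sn. change (plus ?u ?v) with (u + v).
      pose proof (Rpower_sub_succ_ge (INR n + a) r ltac:(pose proof (pos_INR n); lra) Hr).
      unfold hurwitz_term in *. rewrite S_INR. replace (INR n + 1 + a) with (INR n + a + 1) by ring.
      apply (Rmult_le_compat_r (/ (r - 1))) in H; [| left; apply Rinv_0_lt_compat; lra].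
      rewrite (Rmult_comm (r - 1)), Rmult_assoc, Rinv_r, Rmult_1_r in H by lra.
      unfold Rdiv in *. lra. }
  apply (ex_series_bounded _ (Rpower a (- r) + Rpower a (1 - r) / (r - 1))).
  - intro; left; apply hurwitz_term_gt0.
  - intro n. eapply Rle_trans; [apply Hsum |].
    pose proof (Rpower_gt0 (INR n + a) (1 - r)).
    assert (0 < / (r - 1)) by (apply Rinv_0_lt_compat; lra). unfold Rdiv. nra.
Qed.

Lemma hurwitz_zeta_gt0 a r : 0 < a -> 1 < r -> 0 < hurwitz_zeta a r.
Proof.
  intros Ha Hr. eapply Rlt_le_trans; [apply (hurwitz_term_gt0 a r 0) |].
  apply term_le_Series; [intro; left; apply hurwitz_term_gt0 | apply ex_series_hurwitz; auto].
Qed.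

Lemma lp_dominated a p q c z : 0 < a -> 0 < p -> 1 < q * p -> 0 <= c ->
  (forall i, Rabs (z i) <= c * hurwitz_term a q i) ->
  lp_mem p z /\ lp_norm p z <= c * rpow (hurwitz_zeta a (q * p)) (1 / p).
Proof.
  intros Ha Hp Hqp Hc Hz.
  pose proof (ex_series_hurwitz a (q * p) Ha Hqp) as HZ.
  assert (Hle : forall i, Rabs (rpow (Rabs (z i)) p) <= rpow c p * hurwitz_term a (q * p) i).
  { intro i. rewrite Rabs_right by apply Rle_ge, rpow_ge0.
    rewrite <- rpow_hurwitz_term, <- rpowM by (auto; left; apply hurwitz_term_gt0).
    apply rpow_le; auto. split; [apply Rabs_pos | auto]. }
  pose proof (ex_series_Rmult_l (rpow c p) _ HZ) as HcZ.
  assert (Hmem : lp_mem p z) by exact (ex_series_Rabs _ (ex_series_Rabs_le _ _ Hle HcZ)).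
  split; auto.
  assert (HS : Series (fun i => rpow (Rabs (z i)) p) <= rpow c p * hurwitz_zeta a (q * p)).
  { unfold hurwitz_zeta. rewrite <- Series_scal_l. apply Series_le; auto.
    intro i. split; [apply rpow_ge0 |]. specialize (Hle i).
    rewrite Rabs_right in Hle by apply Rle_ge, rpow_ge0. exact Hle. }
  unfold lp_norm. eapply Rle_trans.
  - apply rpow_le; [split; [apply Series_ge0; auto; intro; apply rpow_ge0 | exact HS] |].
    apply Rdiv_lt_0_compat; lra.
  - rewrite rpowM, rpowK by (auto; try apply rpow_ge0; left; apply hurwitz_zeta_gt0; auto).
    lra.
Qed.

(** * Basel's bound *)

(* Matsuoka's proof: with I_k and J_k below, integration by parts gives
   1 / (k + 1)^2 = 2 J_k / I_k - 2 J_(k+1) / I_(k+1), so partial sums telescope to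
   2 J_0 / I_0 - 2 J_(k+1) / I_(k+1) = PI^2/6 - 2 J_(k+1) / I_(k+1). *)
Definition wallis_I (k : nat) : R := RInt (fun x => cos x ^ (2 * k)) 0 (PI / 2).
Definition wallis_J (k : nat) : R := RInt (fun x => x ^ 2 * cos x ^ (2 * k)) 0 (PI / 2).

Lemma continuous_of_ex_derive (f : R -> R) x : ex_derive f x -> continuous f x.
Proof. apply (@ex_derive_continuous R_AbsRing R_NormedModule). Qed.

Lemma ex_wallis_I k : ex_RInt (fun x => cos x ^ (2 * k)) 0 (PI / 2).
Proof.
  apply (@ex_RInt_continuous R_CompleteNormedModule).
  intros z _. apply continuous_of_ex_derive. auto_derive. auto.
Qed.

Lemma ex_wallis_J k : ex_RInt (fun x => x ^ 2 * cos x ^ (2 * k)) 0 (PI / 2).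
Proof.
  apply (@ex_RInt_continuous R_CompleteNormedModule).
  intros z _. apply continuous_of_ex_derive. auto_derive. auto.
Qed.

Lemma RInt_derive_vanishing (F f : R -> R) : (forall x, is_derive F x (f x)) ->
  (forall x, continuous f x) -> F 0 = 0 -> F (PI / 2) = 0 -> is_RInt f 0 (PI / 2) 0.
Proof.
  intros Hd Hc H0 H1.
  pose proof (@is_RInt_derive R_CompleteNormedModule F f 0 (PI / 2)
                (fun x _ => Hd x) (fun x _ => Hc x)).
  rewrite H0, H1, minus_eq_zero in H. exact H.
Qed.

Lemma RInt_comb3_eq0 (f g h : R -> R) al be ga :
  ex_RInt f 0 (PI / 2) -> ex_RInt g 0 (PI / 2) -> ex_RInt h 0 (PI / 2) ->
  is_RInt (fun x => al * f x + be * g x + ga * h x) 0 (PI / 2) 0 ->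
  al * RInt f 0 (PI / 2) + be * RInt g 0 (PI / 2) + ga * RInt h 0 (PI / 2) = 0.
Proof.
  intros Hf Hg Hh H.
  pose proof (is_RInt_plus _ _ _ _ _ _
    (is_RInt_plus _ _ _ _ _ _ (is_RInt_scal _ _ _ al _ (RInt_correct _ _ _ Hf))
                              (is_RInt_scal _ _ _ be _ (RInt_correct _ _ _ Hg)))
    (is_RInt_scal _ _ _ ga _ (RInt_correct _ _ _ Hh))) as Hsum.
  apply (@is_RInt_unique R_CompleteNormedModule) in H.
  apply (@is_RInt_unique R_CompleteNormedModule) in Hsum.
  exact (eq_trans (eq_sym Hsum) H).
Qed.

Lemma wallis_I_rec k : 2 * INR (S k) * wallis_I (S k) = (2 * INR k + 1) * wallis_I k.
Proof.
  enough (H : 2 * INR (S k) * wallis_I (S k) + - (2 * INR k + 1) * wallis_I k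
                + 0 * wallis_I k = 0) by lra.
  apply RInt_comb3_eq0; try apply ex_wallis_I.
  apply RInt_derive_vanishing with (F := fun x => sin x * cos x ^ (S (2 * k))).
  - intro x. auto_derive; auto.
    assert (Hsc : sin x * sin x = 1 - cos x * cos x)
      by (pose proof (sin2_cos2 x); unfold Rsqr in *; lra).
    change (match (k + (k + 0))%nat with 0%nat => 1 | S _ => INR (k + (k + 0)) + 1 end)
      with (INR (S (k + (k + 0)))).
    replace (2 * S k)%nat with (S (S (k + k))) by lia. replace (2 * k)%nat with (k + k)%nat by lia.
    rewrite !Nat.add_0_r. simpl pow. rewrite !S_INR, !plus_INR.
    match goal with |- _ = ?R => transitivity (R - (2 * INR k + 1) * cos x ^ (k + k)
                                   * (sin x * sin x - (1 - cos x * cos x))) end;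
      [ring | rewrite Hsc; ring].
  - intro x. apply continuous_of_ex_derive. auto_derive. auto.
  - rewrite sin_0; ring.
  - rewrite cos_PI2. simpl. ring.
Qed.

Lemma wallis_IJ_rec k :
  wallis_I (S k) + 2 * INR (S k) ^ 2 * wallis_J (S k) = INR (S k) * (2 * INR k + 1) * wallis_J k.
Proof.
  enough (H : 1 * wallis_I (S k) + 2 * INR (S k) ^ 2 * wallis_J (S k)
                + - (INR (S k) * (2 * INR k + 1)) * wallis_J k = 0)
    by (apply Rminus_diag_uniq; rewrite <- H; ring).
  apply RInt_comb3_eq0; [apply ex_wallis_I | apply ex_wallis_J | apply ex_wallis_J |].
  apply RInt_derive_vanishing with (F := fun x => x * cos x ^ (S (S (2 * k)))
                                         + INR (S k) * x ^ 2 * sin x * cos x ^ (S (2 * k))).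
  - intro x. auto_derive; auto.
    assert (Hsc : sin x * sin x = 1 - cos x * cos x)
      by (pose proof (sin2_cos2 x); unfold Rsqr in *; lra).
    change (match (k + (k + 0))%nat with 0%nat => 1 | S _ => INR (k + (k + 0)) + 1 end)
      with (INR (S (k + (k + 0)))).
    change (match k with 0%nat => 1 | S _ => INR k + 1 end) with (INR (S k)).
    replace (2 * S k)%nat with (S (S (k + k))) by lia. replace (2 * k)%nat with (k + k)%nat by lia.
    rewrite !Nat.add_0_r, !S_INR, !plus_INR. simpl pow.
    match goal with |- _ = ?R => transitivity (R - (INR k + 1) * (2 * INR k + 1) * (x * x)
                                   * cos x ^ (k + k) * (sin x * sin x - (1 - cos x * cos x))) end;
      [ring | rewrite Hsc; ring].
  - intro x. apply continuous_of_ex_derive. auto_derive. auto.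
  - rewrite Rmult_0_l, pow_i by lia. ring.
  - rewrite cos_PI2, !pow_i by lia. ring.
Qed.

Lemma wallis_I0 : wallis_I 0 = PI / 2.
Proof.
  unfold wallis_I. apply (@is_RInt_unique R_CompleteNormedModule).
  assert (H := @is_RInt_derive R_CompleteNormedModule (fun x => x) (fun _ => 1) 0 (PI / 2)
                 (fun x _ => ltac:(auto_derive; auto)) (fun x _ => continuous_const 1 x)).
  change (is_RInt (fun _ => 1) 0 (PI / 2) (PI / 2 - 0)) in H. rewrite Rminus_0_r in H.
  eapply is_RInt_ext; [| exact H]. reflexivity.
Qed.

Lemma wallis_J0 : wallis_J 0 = PI ^ 3 / 24.
Proof.
  unfold wallis_J. apply (@is_RInt_unique R_CompleteNormedModule).
  assert (H := @is_RInt_derive R_CompleteNormedModule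
     (fun x => x ^ 3 / 3) (fun x => x ^ 2) 0 (PI / 2)
     (fun x _ => ltac:(auto_derive; [auto | simpl; field]))
     (fun x _ => continuous_of_ex_derive (fun x => x ^ 2) x ltac:(auto_derive; auto))).
  replace (PI ^ 3 / 24) with (minus ((PI / 2) ^ 3 / 3) (0 ^ 3 / 3))
    by (unfold minus, plus, opp; simpl; field).
  eapply is_RInt_ext; [| exact H]. intros x _. simpl. ring.
Qed.

Lemma wallis_I_gt0 k : 0 < wallis_I k.
Proof.
  induction k as [| k IH]; [rewrite wallis_I0; pose proof PI_RGT_0; lra |].
  pose proof (wallis_I_rec k) as Hrec. pose proof (pos_INR k). rewrite S_INR in Hrec.
  replace (wallis_I (S k)) with ((2 * INR k + 1) * wallis_I k / (2 * (INR k + 1)))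
    by (field_simplify_eq; lra).
  apply Rdiv_lt_0_compat; [apply Rmult_lt_0_compat |]; lra.
Qed.

Lemma wallis_J_ge0 k : 0 <= wallis_J k.
Proof.
  apply RInt_ge_0; [pose proof PI_RGT_0; lra | apply ex_wallis_J |].
  intros x _. apply Rmult_le_pos; [apply pow2_ge_0 |].
  rewrite pow_mult. apply pow_le, pow2_ge_0.
Qed.

Lemma inv_sq_wallis k :
  / (INR k + 1) ^ 2 = 2 * wallis_J k / wallis_I k - 2 * wallis_J (S k) / wallis_I (S k).
Proof.
  pose proof (wallis_IJ_rec k) as HIJ. pose proof (wallis_I_rec k) as HI.
  pose proof (wallis_I_gt0 k). pose proof (wallis_I_gt0 (S k)). pose proof (pos_INR k).
  rewrite S_INR in HIJ, HI.
  assert (EI : wallis_I k = 2 * (INR k + 1) * wallis_I (S k) / (2 * INR k + 1))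
    by (field_simplify_eq; lra).
  assert (EJ : wallis_J k = (wallis_I (S k) + 2 * (INR k + 1) ^ 2 * wallis_J (S k))
                            / ((INR k + 1) * (2 * INR k + 1)))
    by (field_simplify_eq; [lra | split; lra]).
  rewrite EI, EJ. field. repeat split; lra.
Qed.

Lemma basel_partial_sum k :
  sum_n (fun i => / (INR i + 1) ^ 2) k = PI ^ 2 / 6 - 2 * wallis_J (S k) / wallis_I (S k).
Proof.
  assert (E0 : 2 * wallis_J 0 / wallis_I 0 = PI ^ 2 / 6).
  { rewrite wallis_I0, wallis_J0. field. pose proof PI_RGT_0; lra. }
  induction k as [| k IH].
  - rewrite sum_O, inv_sq_wallis, E0. reflexivity.
  - rewrite sum_Sn, IH, (inv_sq_wallis (S k)). unfold plus; simpl. ring.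
Qed.

Lemma basel_le :
  ex_series (fun i => / (INR i + 1) ^ 2) /\ Series (fun i => / (INR i + 1) ^ 2) <= PI ^ 2 / 6.
Proof.
  apply ex_series_bounded.
  - intro n. left. apply Rinv_0_lt_compat, pow_lt. pose proof (pos_INR n); lra.
  - intro n. rewrite basel_partial_sum.
    pose proof (wallis_J_ge0 (S n)). pose proof (wallis_I_gt0 (S n)).
    assert (0 <= 2 * wallis_J (S n) / wallis_I (S n)) by (apply Rdiv_le_0_compat; lra). lra.
Qed.

Lemma hurwitz_term2_le a i b : 0 < a -> 0 < b <= INR i + a -> hurwitz_term a 2 i <= / b ^ 2.
Proof.
  intros Ha Hb. rewrite hurwitz_term2 by auto.
  apply Rinv_le_contravar; [apply pow_lt; lra | apply pow_incr; lra].
Qed.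

Lemma hurwitz_zeta2_le a : 0 < a ->
  hurwitz_zeta a 2 <= if Rlt_dec a 1 then 1 / a ^ 2 + PI ^ 2 / 6 else PI ^ 2 / 6.
Proof.
  intro Ha. destruct basel_le as [Hb HbPI].
  pose proof (ex_series_hurwitz a 2 Ha ltac:(lra)) as Hex.
  assert (Hpos : forall i, 0 <= hurwitz_term a 2 i) by (intro; left; apply hurwitz_term_gt0).
  unfold hurwitz_zeta. destruct (Rlt_dec a 1) as [Ha1 | Ha1].
  - rewrite Series_incr_1 by auto.
    replace (hurwitz_term a 2 0) with (1 / a ^ 2)
      by (rewrite hurwitz_term2 by auto; simpl; field; lra).
    enough (Series (fun k => hurwitz_term a 2 (S k)) <= PI ^ 2 / 6) by lra.
    apply Rle_trans with (2 := HbPI), Series_le; [| exact Hb].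
    intro k. split; auto. apply hurwitz_term2_le; auto. rewrite S_INR.
    pose proof (pos_INR k); lra.
  - apply Rle_trans with (2 := HbPI), Series_le; [| exact Hb].
    intro k. split; auto. apply hurwitz_term2_le; auto. pose proof (pos_INR k); lra.
Qed.

(** * The iterated series [Hgen] *)

Lemma Hgen_bound a x n s : 0 < a -> abs_summable x -> 0 <= s ->
  Rabs (Hgen a x n s) <= norm1 x ^ n / (s + a).
Proof.
  intros Ha Hx. pose proof (norm1_ge0 x Hx) as HN.
  revert s; induction n as [| n IH]; intros s Hs; simpl Hgen.
  - rewrite Rabs_right by (left; apply Rinv_0_lt_compat; lra). simpl; lra.
  - eapply Rle_trans.
    + apply (Series_Rabs_le _ (fun j => Rabs (x j) * (norm1 x ^ n / (s + a)))).
      * intro j. pose proof (pos_INR j). rewrite Rabs_mult.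
        apply Rmult_le_compat_l; [apply Rabs_pos |].
        eapply Rle_trans; [apply IH; lra |]. unfold Rdiv.
        apply Rmult_le_compat_l; [apply pow_le; auto | apply Rinv_le_contravar; lra].
      * apply ex_series_Rabs_mult_r, Hx.
    + rewrite Series_Rabs_mult_r. simpl. right; unfold Rdiv; ring.
Qed.

Lemma ex_series_Hgen a x n s : 0 < a -> abs_summable x -> 0 <= s ->
  ex_series (fun j => x j * Hgen a x n (s + INR j)).
Proof.
  intros Ha Hx Hs. apply ex_series_Rabs.
  apply (ex_series_Rabs_le _ (fun j => Rabs (x j) * (norm1 x ^ n / (s + a)))).
  - intro j. pose proof (pos_INR j). rewrite Rabs_mult.
    apply Rmult_le_compat_l; [apply Rabs_pos |].
    eapply Rle_trans; [apply Hgen_bound; auto; lra |]. unfold Rdiv.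
    apply Rmult_le_compat_l; [apply pow_le, norm1_ge0, Hx | apply Rinv_le_contravar; lra].
  - apply ex_series_Rabs_mult_r, Hx.
Qed.

Lemma Hgen_lipschitz a x y M n s : 0 < a -> abs_summable x -> abs_summable y ->
  1 <= M -> norm1 x <= M -> norm1 y <= M -> 0 <= s ->
  Rabs (Hgen a y n s - Hgen a x n s) <= INR n * M ^ n * norm1 (ssub y x) / (s + a).
Proof.
  intros Ha Hx Hy HM HxM HyM. pose proof (abs_summable_sub x y Hx Hy) as Hyx.
  set (D := norm1 (ssub y x)). assert (HD : 0 <= D) by apply norm1_ge0, Hyx.
  pose proof (norm1_ge0 x Hx). pose proof (norm1_ge0 y Hy).
  revert s; induction n as [| n IH]; intros s Hs.
  - simpl. rewrite Rminus_eq_0, Rabs_R0. unfold Rdiv; rewrite !Rmult_0_l; lra.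
  - simpl Hgen. rewrite <- Series_minus by (apply ex_series_Hgen; auto).
    assert (HMn : 0 <= M ^ n) by (apply pow_le; lra).
    assert (Hsa : 0 < / (s + a)) by (apply Rinv_0_lt_compat; lra).
    eapply Rle_trans.
    + apply (Series_Rabs_le _ (fun j => Rabs (ssub y x j) * (M ^ n / (s + a))
                                       + Rabs (x j) * (INR n * M ^ n * D / (s + a)))).
      * intro j. pose proof (pos_INR j).
        replace (y j * Hgen a y n (s + INR j) - x j * Hgen a x n (s + INR j)) with
          (ssub y x j * Hgen a y n (s + INR j)
           + x j * (Hgen a y n (s + INR j) - Hgen a x n (s + INR j))) by (unfold ssub; ring).
        eapply Rle_trans; [apply Rabs_triang |]. rewrite !Rabs_mult.
        apply Rplus_le_compat; apply Rmult_le_compat_l; try apply Rabs_pos.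
        -- eapply Rle_trans; [apply Hgen_bound; auto; lra |]. unfold Rdiv.
           apply Rmult_le_compat; [apply pow_le; lra | left; apply Rinv_0_lt_compat; lra
                                   | apply pow_incr; lra | apply Rinv_le_contravar; lra].
        -- eapply Rle_trans; [apply IH; lra |]. unfold Rdiv.
           apply Rmult_le_compat_l; [| apply Rinv_le_contravar; lra].
           apply Rmult_le_pos; [apply Rmult_le_pos; [apply pos_INR | auto] | auto].
      * apply (ex_series_plus (K := R_AbsRing) (V := R_NormedModule));
          apply ex_series_Rabs_mult_r; auto.
    + rewrite Series_plus, !Series_Rabs_mult_r by (apply ex_series_Rabs_mult_r; auto).
      fold D. set (c := M ^ n * D / (s + a)).
      assert (Hc : 0 <= c) by (unfold c, Rdiv; apply Rmult_le_pos; [apply Rmult_le_pos |]; lra).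
      replace (D * (M ^ n / (s + a)) + norm1 x * (INR n * M ^ n * D / (s + a)))
        with ((1 + norm1 x * INR n) * c) by (unfold c, Rdiv; ring).
      replace (INR (S n) * M ^ S n * D / (s + a)) with ((INR n + 1) * M * c)
        by (unfold c, Rdiv; rewrite S_INR; simpl; ring).
      apply Rmult_le_compat_r; auto. pose proof (pos_INR n). nra.
Qed.

Lemma Hgen_scale a x t n s : Hgen a (sscale t x) n s = t ^ n * Hgen a x n s.
Proof.
  revert s; induction n as [| n IH]; intro s; simpl; [ring |].
  rewrite (Series_ext _ (fun j => (t * t ^ n) * (x j * Hgen a x n (s + INR j)))).
  - apply Series_scal_l.
  - intro j. rewrite IH. unfold sscale. ring.
Qed.

Lemma Hx_bound m a x i : 0 < a -> abs_summable x ->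
  Rabs (Hx m a x i) <= norm1 x ^ (m - 1) * hurwitz_term a 1 i.
Proof.
  intros Ha Hx. rewrite hurwitz_term1 by auto. apply Hgen_bound; auto. apply pos_INR.
Qed.

Lemma Hx_local_bound m a x y i : 0 < a -> abs_summable x -> abs_summable y ->
  norm1 (ssub y x) < 1 -> Rabs (Hx m a y i) <= (norm1 x + 1) ^ (m - 1) * hurwitz_term a 1 i.
Proof.
  intros Ha Hx Hy Hd. eapply Rle_trans; [apply Hx_bound; auto |].
  apply Rmult_le_compat_r; [left; apply hurwitz_term_gt0 |].
  pose proof (norm1_triangle x y Hx Hy). apply pow_incr. split; [apply norm1_ge0, Hy | lra].
Qed.

Lemma Hx_scale m a x t i : Hx m a (sscale t x) i = t ^ (m - 1) * Hx m a x i.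
Proof. apply Hgen_scale. Qed.

Lemma Hx_theta m a i : (2 <= m)%nat -> Hx m a theta i = 0.
Proof.
  intro Hm. unfold Hx. destruct (m - 1)%nat as [| n] eqn:E; [lia | simpl].
  rewrite (Series_ext _ (fun j => 0 * Hgen a theta n (INR i + INR j))) by reflexivity.
  rewrite Series_scal_l. ring.
Qed.

(** * Operators dominated by a Hurwitz weight *)

Definition weighted_continuous_at (b : nat -> R) (V : (nat -> R) -> nat -> R) (x : nat -> R)
  : Prop :=
  forall eps, 0 < eps -> exists d, 0 < d /\
    forall y, abs_summable y -> norm1 (ssub y x) < d -> forall i, Rabs (V y i - V x i) <= eps * b i.

Lemma weighted_continuous_at_ext b U V x : (forall y, abs_summable y -> U y = V y) ->
  abs_summable x -> weighted_continuous_at b V x -> weighted_continuous_at b U x.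
Proof.
  intros HUV Sx HV eps He. destruct (HV eps He) as [d [Hd H]]. exists d; split; auto.
  intros y Sy Hyx i. rewrite !HUV by auto. auto.
Qed.

Lemma share_le_half e P : 0 < e -> 0 <= P -> e / (2 * (P + 1)) * P <= e / 2.
Proof.
  intros He HP. replace (e / (2 * (P + 1)) * P) with (e / 2 - e / (2 * (P + 1))) by (field; lra).
  assert (0 < e / (2 * (P + 1))) by (apply Rdiv_lt_0_compat; lra). lra.
Qed.

Lemma weighted_continuous_at_mul b al V x P : (forall i, 0 <= b i) -> 0 <= P ->
  (forall eps, 0 < eps -> exists d, 0 < d /\
     forall y, abs_summable y -> norm1 (ssub y x) < d -> Rabs (al y - al x) < eps) ->
  (forall y, abs_summable y -> norm1 (ssub y x) < 1 -> forall i, Rabs (V y i) <= P * b i) ->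
  weighted_continuous_at b V x ->
  weighted_continuous_at b (fun y i => al y * V y i) x.
Proof.
  intros Hb HP Hal HVb HV eps He.
  set (A := Rabs (al x)). assert (HA : 0 <= A) by apply Rabs_pos.
  destruct (Hal (eps / (2 * (P + 1)))) as [d1 [Hd1 H1]]; [apply Rdiv_lt_0_compat; lra |].
  destruct (HV (eps / (2 * (A + 1)))) as [d2 [Hd2 H2]]; [apply Rdiv_lt_0_compat; lra |].
  exists (Rmin 1 (Rmin d1 d2)). split; [repeat apply Rmin_glb_lt; lra |].
  intros y Sy Hyx i. pose proof (Hb i).
  pose proof (Rmin_l 1 (Rmin d1 d2)). pose proof (Rmin_r 1 (Rmin d1 d2)).
  pose proof (Rmin_l d1 d2). pose proof (Rmin_r d1 d2).
  replace (al y * V y i - al x * V x i) with ((al y - al x) * V y i + al x * (V y i - V x i))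
    by ring.
  eapply Rle_trans; [apply Rabs_triang |]. rewrite !Rabs_mult. fold A.
  assert (Hterm1 : Rabs (al y - al x) * Rabs (V y i) <= eps / 2 * b i).
  { eapply Rle_trans.
    - apply Rmult_le_compat; try apply Rabs_pos; [left; apply H1 | apply HVb]; auto; lra.
    - rewrite <- Rmult_assoc. apply Rmult_le_compat_r; auto. apply share_le_half; lra. }
  assert (Hterm2 : A * Rabs (V y i - V x i) <= eps / 2 * b i).
  { eapply Rle_trans.
    - apply Rmult_le_compat_l; auto. apply H2; auto; lra.
    - rewrite <- Rmult_assoc, (Rmult_comm A). apply Rmult_le_compat_r; auto.
      apply share_le_half; lra. }
  lra.
Qed.

Lemma weighted_continuous_at_oddroot n b V x : (1 <= n)%nat -> (forall i, 0 <= b i) ->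
  weighted_continuous_at b V x ->
  weighted_continuous_at (fun i => rpow (b i) (1 / INR n)) (fun y i => oddroot n (V y i)) x.
Proof.
  intros Hn Hb HV eps He. pose proof (inv_INR_bounds n Hn) as Hal.
  destruct (HV ((eps / 2) ^ n)) as [d [Hd H]]; [apply pow_lt; lra |].
  exists d; split; auto. intros y Sy Hyx i.
  eapply Rle_trans; [apply oddroot_holder, Hn |].
  enough (rpow (Rabs (V y i - V x i)) (1 / INR n) <= eps / 2 * rpow (b i) (1 / INR n)) by lra.
  rewrite <- (rpow_pow_inv (eps / 2) n), <- rpowM by (auto; try apply pow_le; lra).
  apply rpow_le; [split; [apply Rabs_pos | apply H; auto] | lra].
Qed.

Section DominatedOperator.

Variables (a q p : R) (T : (nat -> R) -> nat -> R).
Hypotheses (Ha : 0 < a) (Hp : 0 < p) (Hqp : 1 < q * p).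
Hypothesis T_dominated :
  forall x, abs_summable x -> forall i, Rabs (T x i) <= norm1 x * hurwitz_term a q i.
Hypothesis T_continuous :
  forall x, abs_summable x -> weighted_continuous_at (hurwitz_term a q) T x.

Let C := rpow (hurwitz_zeta a (q * p)) (1 / p).

Lemma dominated_lp_mem x : lp_mem 1 x -> lp_mem p (T x).
Proof.
  intro Sx. apply lp_mem1 in Sx.
  apply (lp_dominated a p q (norm1 x)); auto. apply norm1_ge0, Sx.
Qed.

Lemma dominated_lp_norm x : abs_summable x -> lp_norm p (T x) <= norm1 x * C.
Proof. intro Sx. apply (lp_dominated a p q (norm1 x)); auto. apply norm1_ge0, Sx. Qed.

Lemma dominated_bounded : bounded_op p T.
Proof.
  assert (HC : 0 <= C) by apply rpow_ge0.
  exists (C + 1). split; [lra |]. intros x Sx. apply lp_mem1 in Sx.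
  rewrite lp_norm1 by auto. pose proof (norm1_ge0 x Sx).
  eapply Rle_trans; [apply dominated_lp_norm; auto |]. nra.
Qed.

Lemma dominated_continuous : continuous_op p T.
Proof.
  assert (HC : 0 <= C) by apply rpow_ge0.
  intros x Sx eps He. apply lp_mem1 in Sx.
  set (e := eps / (2 * (C + 1))). assert (He' : 0 < e) by (apply Rdiv_lt_0_compat; lra).
  destruct (T_continuous x Sx e He') as [d [Hd H]].
  exists d; split; auto. intros y Sy Hyx. apply lp_mem1 in Sy.
  rewrite lp_norm1 in Hyx by (apply abs_summable_sub; auto).
  destruct (lp_dominated a p q e (ssub (T y) (T x)) Ha Hp Hqp ltac:(lra) (H y Sy Hyx))
    as [_ Hn].
  eapply Rle_lt_trans; [apply Hn |]. fold C.
  pose proof (share_le_half eps C He HC). fold e in H0. lra.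
Qed.

End DominatedOperator.

(** * The operators [F_inf] and [T_inf] *)

Lemma Hx_weighted_continuous m a x : 0 < a -> abs_summable x ->
  weighted_continuous_at (hurwitz_term a 1) (Hx m a) x.
Proof.
  intros Ha Sx eps He.
  set (n := (m - 1)%nat). set (M := norm1 x + 1). set (L := INR n * M ^ n + 1).
  pose proof (norm1_ge0 x Sx).
  assert (HL : 0 < L)
    by (unfold L; pose proof (pos_INR n); pose proof (pow_le M n ltac:(unfold M; lra)); nra).
  exists (Rmin 1 (eps / L)). split; [apply Rmin_glb_lt; [lra | apply Rdiv_lt_0_compat; lra] |].
  intros y Sy Hyx i. pose proof (Rmin_l 1 (eps / L)). pose proof (Rmin_r 1 (eps / L)).
  pose proof (norm1_triangle x y Sx Sy).
  set (D := norm1 (ssub y x)) in *.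
  assert (HD : 0 <= D) by (apply norm1_ge0, abs_summable_sub; auto).
  unfold Hx. rewrite hurwitz_term1 by auto.
  eapply Rle_trans; [apply (Hgen_lipschitz a x y M); auto; try apply pos_INR; unfold M; lra |].
  fold n D. unfold Rdiv.
  apply Rmult_le_compat_r; [left; apply Rinv_0_lt_compat; pose proof (pos_INR i); lra |].
  assert (HLD : L * D <= eps).
  { replace eps with (L * (eps / L)) by (field; lra). apply Rmult_le_compat_l; lra. }
  unfold L in HLD. lra.
Qed.

Lemma F_inf_dominated m a x i : (2 <= m)%nat -> 0 < a -> abs_summable x ->
  Rabs (F_inf m a x i) <= norm1 x * hurwitz_term a (1 / INR (m - 1)) i.
Proof.
  intros Hm Ha Sx. unfold F_inf. rewrite oddroot_abs.
  pose proof (inv_INR_bounds (m - 1) ltac:(lia)). pose proof (norm1_ge0 x Sx).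
  eapply Rle_trans; [apply rpow_le; [split; [apply Rabs_pos | apply Hx_bound; auto] | lra] |].
  rewrite rpowM, rpow_pow_inv, rpow_hurwitz_term, Rmult_1_l by (try apply pow_le; auto; try lia;
                                                                left; apply hurwitz_term_gt0).
  lra.
Qed.

Lemma F_inf_weighted_continuous m a x : (2 <= m)%nat -> 0 < a -> abs_summable x ->
  weighted_continuous_at (hurwitz_term a (1 / INR (m - 1))) (F_inf m a) x.
Proof.
  intros Hm Ha Sx.
  replace (hurwitz_term a (1 / INR (m - 1)))
    with (fun i => rpow (hurwitz_term a 1 i) (1 / INR (m - 1)))
    by (apply functional_extensionality; intro; rewrite rpow_hurwitz_term, Rmult_1_l; reflexivity).
  apply weighted_continuous_at_oddroot; [lia | intro; left; apply hurwitz_term_gt0 |].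
  apply Hx_weighted_continuous; auto.
Qed.

Lemma F_inf_pos_homog m a : (2 <= m)%nat -> pos_homog (F_inf m a).
Proof.
  intros Hm x t _ Ht. apply functional_extensionality; intro i.
  unfold F_inf, sscale at 2. rewrite Hx_scale. apply oddroot_scale; auto; lia.
Qed.

Lemma T_inf_theta m a : T_inf m a theta = theta.
Proof. unfold T_inf. destruct (excluded_middle_informative (theta = theta)); congruence. Qed.

Lemma T_inf_eq m a x : (2 <= m)%nat -> abs_summable x ->
  T_inf m a x = fun i => Rpower (norm1 x) (2 - INR m) * Hx m a x i.
Proof.
  intros Hm Sx. unfold T_inf. destruct (excluded_middle_informative (x = theta)) as [-> | _].
  - apply functional_extensionality; intro i. rewrite Hx_theta by auto. unfold theta; ring.
  - rewrite lp_norm1 by auto. reflexivity.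
Qed.

Lemma Rpower_pow_pred_cancel m c : (2 <= m)%nat -> 0 <= c -> Rpower c (2 - INR m) * c ^ (m - 1) = c.
Proof.
  intros Hm [Hc | <-]; [| rewrite pow_i by lia; ring].
  rewrite <- Rpower_pow, <- Rpower_plus, minus_INR by (auto; lia).
  replace (2 - INR m + (INR m - INR 1)) with 1 by (simpl; ring). apply Rpower_1, Hc.
Qed.

Lemma T_inf_dominated m a x i : (2 <= m)%nat -> 0 < a -> abs_summable x ->
  Rabs (T_inf m a x i) <= norm1 x * hurwitz_term a 1 i.
Proof.
  intros Hm Ha Sx. rewrite T_inf_eq, Rabs_mult, Rabs_right by (auto; left; apply Rpower_gt0).
  eapply Rle_trans; [apply Rmult_le_compat_l; [left; apply Rpower_gt0 | apply Hx_bound; auto] |].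
  rewrite <- Rmult_assoc, Rpower_pow_pred_cancel by (auto; apply norm1_ge0, Sx). lra.
Qed.

Lemma T_inf_weighted_continuous m a x : (2 <= m)%nat -> 0 < a -> abs_summable x ->
  weighted_continuous_at (hurwitz_term a 1) (T_inf m a) x.
Proof.
  intros Hm Ha Sx. destruct (excluded_middle_informative (x = theta)) as [-> | Hne].
  - intros eps He. exists eps. split; auto. intros y Sy Hy i.
    rewrite T_inf_theta. change (theta i) with 0. rewrite Rminus_0_r.
    eapply Rle_trans; [apply T_inf_dominated; auto |].
    replace (norm1 y) with (norm1 (ssub y theta))
      by (unfold norm1, ssub, theta; apply Series_ext; intro; rewrite Rminus_0_r; reflexivity).
    apply Rmult_le_compat_r; [left; apply hurwitz_term_gt0 | lra].
  - apply (weighted_continuous_at_ext _ _ (fun y i => Rpower (norm1 y) (2 - INR m) * Hx m a y i));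
      [intros y Sy; apply T_inf_eq; auto | auto |].
    apply (weighted_continuous_at_mul _ _ _ _ ((norm1 x + 1) ^ (m - 1))).
    + intro; left; apply hurwitz_term_gt0.
    + apply pow_le. pose proof (norm1_ge0 x Sx); lra.
    + intros eps He.
      destruct (Rpower_base_continuous (2 - INR m) (norm1 x) eps) as [d [Hd H]];
        [apply norm1_gt0; auto | auto |].
      exists d; split; auto. intros y Sy Hyx. apply H.
      pose proof (norm1_dist x y Sx Sy). lra.
    + intros y Sy Hyx i. apply Hx_local_bound; auto.
    + apply Hx_weighted_continuous; auto.
Qed.

Lemma T_inf_pos_homog m a : (2 <= m)%nat -> pos_homog (T_inf m a).
Proof.
  intros Hm x t Sx Ht. apply lp_mem1 in Sx.
  destruct (excluded_middle_informative (x = theta)) as [-> | Hne].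
  - assert (Ht0 : sscale t theta = theta)
      by (apply functional_extensionality; intro; unfold sscale, theta; ring).
    rewrite Ht0, T_inf_theta. exact (eq_sym Ht0).
  - assert (HN : norm1 (sscale t x) = t * norm1 x).
    { unfold norm1, sscale. rewrite <- Series_scal_l. apply Series_ext; intro.
      rewrite Rabs_mult, (Rabs_right t) by lra. reflexivity. }
    pose proof (norm1_gt0 x Sx Hne).
    rewrite !T_inf_eq by (auto using abs_summable_scale).
    apply functional_extensionality; intro i. unfold sscale at 3.
    rewrite HN, Hx_scale, <- Rpower_mult_distr by lra.
    transitivity ((Rpower t (2 - INR m) * t ^ (m - 1))
                  * (Rpower (norm1 x) (2 - INR m) * Hx m a x i));
      [ring | rewrite Rpower_pow_pred_cancel by (auto; lra); reflexivity].
Qed.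

Lemma F_inf_exponent m p : (2 <= m)%nat -> INR m - 1 < p -> 1 < 1 / INR (m - 1) * p.
Proof.
  intros Hm Hp. rewrite minus_INR by lia. simpl INR.
  assert (1 < INR m) by (apply (lt_INR 1); lia).
  apply (Rmult_lt_reg_l (INR m - 1)); [lra |]. field_simplify; lra.
Qed.

Lemma F_inf_lp m a p : (2 <= m)%nat -> 0 < a -> INR m - 1 < p ->
  (forall x, lp_mem 1 x -> lp_mem p (F_inf m a x)) /\
  bounded_op p (F_inf m a) /\ continuous_op p (F_inf m a).
Proof.
  intros Hm Ha Hp. pose proof (F_inf_exponent m p Hm Hp) as Hqp.
  assert (Hp0 : 0 < p) by (pose proof (le_INR 2 m ltac:(lia)); simpl in *; lra).
  pose proof (fun x Sx i => F_inf_dominated m a x i Hm Ha Sx) as Hdom.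
  pose proof (fun x Sx => F_inf_weighted_continuous m a x Hm Ha Sx) as Hcont.
  repeat split.
  - apply (dominated_lp_mem a (1 / INR (m - 1))); auto.
  - apply (dominated_bounded a (1 / INR (m - 1))); auto.
  - apply (dominated_continuous a (1 / INR (m - 1))); auto.
Qed.

Lemma T_inf_lp m a p : (2 <= m)%nat -> 0 < a -> 1 < p ->
  (forall x, lp_mem 1 x -> lp_mem p (T_inf m a x)) /\
  bounded_op p (T_inf m a) /\ continuous_op p (T_inf m a).
Proof.
  intros Hm Ha Hp. assert (Hqp : 1 < 1 * p) by lra.
  pose proof (fun x Sx i => T_inf_dominated m a x i Hm Ha Sx) as Hdom.
  pose proof (fun x Sx => T_inf_weighted_continuous m a x Hm Ha Sx) as Hcont.
  repeat split.
  - apply (dominated_lp_mem a 1); auto; lra.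
  - apply (dominated_bounded a 1); auto; lra.
  - apply (dominated_continuous a 1); auto; lra.
Qed.

Lemma F_inf_norm_le m a x : (2 <= m)%nat -> 0 < a -> lp_mem 1 x -> lp_norm 1 x = 1 ->
  lp_norm (2 * (INR m - 1)) (F_inf m a x) <= K_const m a.
Proof.
  intros Hm Ha Sx Hx1. apply lp_mem1 in Sx. rewrite lp_norm1 in Hx1 by auto.
  set (p := 2 * (INR m - 1)).
  assert (Hm1 : 1 < INR m) by (apply (lt_INR 1); lia).
  assert (Hq : 1 / INR (m - 1) * p = 2) by (unfold p; rewrite minus_INR by lia; simpl; field; lra).
  destruct (lp_dominated a p (1 / INR (m - 1)) (norm1 x) (F_inf m a x) Ha ltac:(unfold p; lra)
              ltac:(lra) (norm1_ge0 x Sx) (fun i => F_inf_dominated m a x i Hm Ha Sx)) as [_ Hn].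
  eapply Rle_trans; [exact Hn |].
  rewrite Hx1, Rmult_1_l, Hq, rpowE by (apply hurwitz_zeta_gt0; lra).
  pose proof (hurwitz_zeta2_le a Ha). pose proof (hurwitz_zeta_gt0 a 2 Ha ltac:(lra)).
  unfold K_const. fold p.
  destruct (Rlt_dec a 1); apply Rle_Rpower_l; auto; left; apply Rdiv_lt_0_compat; unfold p; lra.
Qed.

Lemma T_inf_norm_le m a x : (2 <= m)%nat -> 0 < a -> lp_mem 1 x -> lp_norm 1 x = 1 ->
  lp_norm 2 (T_inf m a x) <= C_const a.
Proof.
  intros Hm Ha Sx Hx1. apply lp_mem1 in Sx. rewrite lp_norm1 in Hx1 by auto.
  destruct (lp_dominated a 2 1 (norm1 x) (T_inf m a x) Ha ltac:(lra) ltac:(lra)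
              (norm1_ge0 x Sx) (fun i => T_inf_dominated m a x i Hm Ha Sx)) as [_ Hn].
  eapply Rle_trans; [exact Hn |].
  rewrite Hx1, !Rmult_1_l, rpowE by (apply hurwitz_zeta_gt0; lra).
  replace (1 / 2) with (/ 2) by field. rewrite Rpower_sqrt by (apply hurwitz_zeta_gt0; lra).
  pose proof (hurwitz_zeta2_le a Ha). unfold C_const.
  destruct (Rlt_dec a 1); [apply sqrt_le_1_alt; auto |].
  replace (PI / sqrt 6) with (sqrt (PI ^ 2 / 6)) by
    (rewrite sqrt_div_alt, <- Rsqr_pow2, sqrt_Rsqr by (pose proof PI_RGT_0; lra); reflexivity).
  apply sqrt_le_1_alt; auto.
Qed.

Theorem theorem3p2 (m : nat) (a : R) (hm : (2 <= m)%nat) (ha : 0 < a) :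
  (Nat.Even m ->
     (forall x p, lp_mem 1 x -> INR m - 1 < p -> lp_mem p (F_inf m a x)) /\
     (forall p, INR m - 1 < p ->
        bounded_op p (F_inf m a) /\ continuous_op p (F_inf m a) /\
        pos_homog (F_inf m a)) /\
     (forall x, lp_mem 1 x -> lp_norm 1 x = 1 ->
        lp_norm (2 * (INR m - 1)) (F_inf m a x) <= K_const m a)) /\
  ((forall x p, lp_mem 1 x -> 1 < p -> lp_mem p (T_inf m a x)) /\
   (forall p, 1 < p ->
      bounded_op p (T_inf m a) /\ continuous_op p (T_inf m a) /\
      pos_homog (T_inf m a)) /\
   (forall x, lp_mem 1 x -> lp_norm 1 x = 1 ->
      lp_norm 2 (T_inf m a x) <= C_const a)).
Proof.
  split; [intros _; split; [| split] | split; [| split]].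
  - intros x p Sx Hp. apply (F_inf_lp m a p); auto.
  - intros p Hp. destruct (F_inf_lp m a p) as (_ & Hb & Hc); auto.
    repeat split; auto. apply F_inf_pos_homog, hm.
  - intros x Sx Hx1. apply F_inf_norm_le; auto.
  - intros x p Sx Hp. apply (T_inf_lp m a p); auto.
  - intros p Hp. destruct (T_inf_lp m a p) as (_ & Hb & Hc); auto.
    repeat split; auto. apply T_inf_pos_homog, hm.
  - intros x Sx Hx1. apply T_inf_norm_le; auto.
Qed.
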